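(* Let $(F,+,\cdot)$ be a (left) near-field, $I$ an index set, and $\boldsymbol\sigma=(\sigma_i)_{i\in I}$, $\boldsymbol\rho=(\rho_i)_{i\in I}$ families of multiplicative automorphisms of $F$. Let $\boldsymbol{\mathrm{Id}}=(\mathrm{Id})_{i\in I}$ and $\boldsymbol\theta=(\sigma_i\circ\rho_i)_{i\in I}$. Then (1) $F^{\boldsymbol\sigma,\boldsymbol\rho}\simeq F^{\boldsymbol\theta,\boldsymbol{\mathrm{Id}}}$, and (2) $F^{\boldsymbol\sigma,\boldsymbol\rho}\simeq F^{\boldsymbol{\mathrm{Id}},\boldsymbol\theta}$, as near-vector spaces.
   Context: A (left) near-field is $(F,+,\cdot,0,1)$ where $(F,\cdot,1)$ is a monoid, $(F\setminus\{0\},\cdot)$ is a group, $(F,+,0)$ is an abelian group, and $\alpha(\beta+\gamma)=\alpha\beta+\alpha\gamma$. A multiplicative automorphism is a monoid automorphism of $(F,\cdot)$. For $\tau$ multiplicative, $\alpha+_\tau\beta=\tau^{-1}(\tau(\alpha)+\tau(\beta))$. For families $\boldsymbol\sigma=(\sigma_i)_{i\in I}$, $\boldsymbol\rho=(\rho_i)_{i\in I}$ of multiplicative automorphisms, $F^{\boldsymbol\sigma,\boldsymbol\rho}$ is the set of finitely supported $(\alpha_i)_{i\in I}\in F^I$ with addition $(\alpha_i)+_{\boldsymbol\sigma}(\beta_i)=(\alpha_i+_{\sigma_i}\beta_i)$ and scalar multiplication $\alpha\cdot_{\boldsymbol\rho}(\alpha_i)=(\rho_i(\alpha)\alpha_i)$;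 it is a near-vector space over the scalar group $(F,\cdot,1,0,-1)$. An isomorphism of near-vector spaces $V_1\to V_2$ over $F$ is a pair $(\theta,\eta)$ with $\theta$ an additive bijection and $\eta$ a monoid automorphism of $F\setminus\{0\}$ such that $\theta(\alpha u)=\eta(\alpha)\theta(u)$. *)

From Stdlib Require Import List.
Set Implicit Arguments.

Record NearField := {
  nf_car :> Type;
  nf_add : nf_car -> nf_car -> nf_car;
  nf_opp : nf_car -> nf_car;
  nf_mul : nf_car -> nf_car -> nf_car;
  nf_zero : nf_car;
  nf_one : nf_car;
  nf_addA : forall a b c, nf_add a (nf_add b c) = nf_add (nf_add a b) c;
  nf_addC : forall a b, nf_add a b = nf_add b a;
  nf_add0l : forall a, nf_add nf_zero a = a;
  nf_addNl : forall a, nf_add (nf_opp a) a = nf_zero;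
  nf_mulA : forall a b c, nf_mul a (nf_mul b c) = nf_mul (nf_mul a b) c;
  nf_mul1l : forall a, nf_mul nf_one a = a;
  nf_mul1r : forall a, nf_mul a nf_one = a;
  nf_one_neq0 : nf_one <> nf_zero;
  nf_mul_neq0 : forall a b, a <> nf_zero -> b <> nf_zero -> nf_mul a b <> nf_zero;
  nf_invex : forall a, a <> nf_zero ->
      exists b, b <> nf_zero /\ nf_mul a b = nf_one /\ nf_mul b a = nf_one;
  nf_distl : forall a b c, nf_mul a (nf_add b c) = nf_add (nf_mul a b) (nf_mul a c)
}.

Record MultAut (F : NearField) := {
  ma_fun :> F -> F;
  ma_inv : F -> F;
  ma_mul : forall a b, ma_fun (nf_mul F a b) = nf_mul F (ma_fun a) (ma_fun b);
  ma_one : ma_fun (nf_one F) = nf_one F;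
  ma_invK : forall a, ma_inv (ma_fun a) = a;
  ma_funK : forall a, ma_fun (ma_inv a) = a
}.

Definition ma_id (F : NearField) : MultAut F.
Proof.
  refine {| ma_fun := fun a => a; ma_inv := fun a => a |}; reflexivity.
Defined.

Definition ma_comp (F : NearField) (s r : MultAut F) : MultAut F.
Proof.
  refine {| ma_fun := fun a => s (r a); ma_inv := fun a => ma_inv r (ma_inv s a) |}.
  - intros a b. rewrite (ma_mul r), (ma_mul s). reflexivity.
  - rewrite (ma_one r), (ma_one s). reflexivity.
  - intros a. rewrite (ma_invK s), (ma_invK r). reflexivity.
  - intros a. rewrite (ma_funK r), (ma_funK s). reflexivity.
Defined.

Definition add_tau (F : NearField) (t : MultAut F) (a b : F) : F :=
  ma_inv t (nf_add F (t a) (t b)).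

(* Carrier of F^{sigma,rho}: finitely supported families (alpha_i)_{i in I}. *)
Definition fin_supp (F : NearField) (I : Type) (u : I -> F) : Prop :=
  exists s : list I, forall i, u i <> nf_zero F -> In i s.
Arguments fin_supp {F I} u.

Definition nvs_add (F : NearField) (I : Type) (sig : I -> MultAut F)
  (u v : I -> F) : I -> F := fun i => add_tau (sig i) (u i) (v i).

Definition nvs_smul (F : NearField) (I : Type) (rho : I -> MultAut F)
  (a : F) (u : I -> F) : I -> F := fun i => nf_mul F (rho i a) (u i).

(* eta is a monoid automorphism of (F \ {0}, .) (values of eta at 0 are irrelevant) *)
Definition nz_mon_aut (F : NearField) (eta : F -> F) : Prop :=
  (forall a, a <> nf_zero F -> eta a <> nf_zero F) /\
  (forall a b, a <> nf_zero F -> b <> nf_zero F ->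
      eta (nf_mul F a b) = nf_mul F (eta a) (eta b)) /\
  eta (nf_one F) = nf_one F /\
  (forall a b, a <> nf_zero F -> b <> nf_zero F -> eta a = eta b -> a = b) /\
  (forall c, c <> nf_zero F -> exists a, a <> nf_zero F /\ eta a = c).

Definition nvs_iso (F : NearField) (I : Type)
  (sig1 rho1 sig2 rho2 : I -> MultAut F) : Prop :=
  exists (th : (I -> F) -> (I -> F)) (eta : F -> F),
    (forall u : I -> F, fin_supp u -> fin_supp (th u)) /\
    (forall u v : I -> F, fin_supp u -> fin_supp v -> th u = th v -> u = v) /\
    (forall w : I -> F, fin_supp w -> exists u : I -> F, fin_supp u /\ th u = w) /\
    (forall u v : I -> F, fin_supp u -> fin_supp v ->
        th (nvs_add sig1 u v) = nvs_add sig2 (th u) (th v)) /\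
    @nz_mon_aut F eta /\
    (forall (a : F) (u : I -> F), a <> nf_zero F -> fin_supp u ->
        th (nvs_smul rho1 a u) = nvs_smul rho2 (eta a) (th u)).

(* The coordinatewise map u |-> (tau_i(u_i))_i, for multiplicative automorphisms
   tau_i, transports F^{sigma,rho} isomorphically (with eta = id) onto
   F^{sigma o tau^-1, tau o rho}: it conjugates each twisted addition +_{sigma_i}
   into +_{sigma_i o tau_i^-1}, and it turns the scalar action rho_i(a) u_i into
   tau_i(rho_i(a)) tau_i(u_i). Taking tau = rho^-1 gives (1), and tau = sigma
   gives (2). *)
From Stdlib Require Import Classical FunctionalExtensionality.
Set Implicit Arguments.

Section NearFieldFacts.

Variable F : NearField.

Lemma nf_mulr0 (a : F) : nf_mul F a (nf_zero F) = nf_zero F.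
Proof.
  set (x := nf_mul F a (nf_zero F)).
  assert (Hxx : x = nf_add F x x).
  { unfold x. rewrite <- nf_distl, nf_add0l. reflexivity. }
  assert (Hcancel : nf_add F (nf_opp F x) x = nf_add F (nf_opp F x) (nf_add F x x)).
  { rewrite <- Hxx. reflexivity. }
  rewrite nf_addA, nf_addNl, nf_add0l in Hcancel. symmetry. exact Hcancel.
Qed.

(* Only left distributivity is available, so 0 b = 0 needs the group of units:
   for b <> 0 with inverse c, (0 b) c = 0 forbids 0 b <> 0. *)
Lemma nf_mul0r (b : F) : nf_mul F (nf_zero F) b = nf_zero F.
Proof.
  destruct (classic (b = nf_zero F)) as [-> | Hb]; [apply nf_mulr0 |].
  destruct (nf_invex F Hb) as [c [Hc [Hbc _]]].
  apply NNPP. intro Hnz.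
  apply (nf_mul_neq0 F Hnz Hc).
  rewrite <- nf_mulA, Hbc. apply nf_mul1r.
Qed.

Lemma ma_fun0 (t : MultAut F) : t (nf_zero F) = nf_zero F.
Proof.
  rewrite <- (nf_mulr0 (ma_inv t (nf_zero F))) at 1.
  rewrite ma_mul, ma_funK. apply nf_mul0r.
Qed.

Lemma ma_inv0 (t : MultAut F) : ma_inv t (nf_zero F) = nf_zero F.
Proof. rewrite <- (ma_fun0 t) at 1. apply ma_invK. Qed.

Lemma ma_inv1 (t : MultAut F) : ma_inv t (nf_one F) = nf_one F.
Proof. rewrite <- (ma_one t) at 1. apply ma_invK. Qed.

Lemma ma_invM (t : MultAut F) (a b : F) :
  ma_inv t (nf_mul F a b) = nf_mul F (ma_inv t a) (ma_inv t b).
Proof.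
  rewrite <- (ma_funK t a) at 1. rewrite <- (ma_funK t b) at 1.
  rewrite <- ma_mul. apply ma_invK.
Qed.

Definition ma_inverse (t : MultAut F) : MultAut F :=
  {| ma_fun := ma_inv t; ma_inv := t;
     ma_mul := ma_invM t; ma_one := ma_inv1 t;
     ma_invK := ma_funK t; ma_funK := ma_invK t |}.

Lemma nz_mon_aut_id : @nz_mon_aut F (fun a : F => a).
Proof.
  repeat split; auto.
  intros c Hc. exists c. auto.
Qed.

End NearFieldFacts.

Section Coordinatewise.

Variables (F : NearField) (I : Type).

Definition coordwise (tau : I -> F -> F) (u : I -> F) : I -> F :=
  fun i => tau i (u i).

Lemma fin_supp_coordwise (tau : I -> F -> F) (u : I -> F) :
  (forall i, tau i (nf_zero F) = nf_zero F) -> fin_supp u ->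
  fin_supp (coordwise tau u).
Proof.
  intros Htau0 [s Hs]. exists s. intros i Hi. apply Hs.
  intros Hu. apply Hi. unfold coordwise. rewrite Hu. apply Htau0.
Qed.

Lemma nvs_iso_coordwise (tau sig1 rho1 sig2 rho2 : I -> MultAut F) :
  (forall i a, sig2 i (tau i a) = sig1 i a) ->
  (forall i a, tau i (rho1 i a) = rho2 i a) ->
  nvs_iso sig1 rho1 sig2 rho2.
Proof.
  intros Hsig Hrho.
  assert (Hsig_inv : forall i a, ma_inv (sig2 i) a = tau i (ma_inv (sig1 i) a)).
  { intros i a. rewrite <- (ma_funK (sig1 i) a) at 1.
    rewrite <- Hsig. apply ma_invK. }
  exists (coordwise tau), (fun a => a).
  split; [| split; [| split; [| split; [| split]]]].
  - intros u. apply fin_supp_coordwise. intro i. apply ma_fun0.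
  - intros u v _ _ Huv. extensionality i.
    rewrite <- (ma_invK (tau i) (u i)), <- (ma_invK (tau i) (v i)).
    apply (f_equal (fun w => ma_inv (tau i) (w i))) in Huv. exact Huv.
  - intros w Hw. exists (coordwise (fun i => ma_inv (tau i)) w). split.
    + apply fin_supp_coordwise; [intro i; apply ma_inv0 | exact Hw].
    + extensionality i. apply ma_funK.
  - intros u v _ _. extensionality i.
    unfold coordwise, nvs_add, add_tau. rewrite !Hsig, Hsig_inv. reflexivity.
  - apply nz_mon_aut_id.
  - intros a u _ _. extensionality i.
    unfold coordwise, nvs_smul. rewrite ma_mul, Hrho. reflexivity.
Qed.

End Coordinatewise.

Theorem lemma3p14 (F : NearField) (I : Type) (sig rho : I -> MultAut F) :
  nvs_iso sig rho (fun i => ma_comp (sig i) (rho i)) (fun _ => ma_id F) /\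
  nvs_iso sig rho (fun _ => ma_id F) (fun i => ma_comp (sig i) (rho i)).
Proof.
  split.
  - apply (nvs_iso_coordwise (fun i => ma_inverse (rho i))); simpl.
    + intros i a. rewrite ma_funK. reflexivity.
    + intros i a. apply ma_invK.
  - apply (nvs_iso_coordwise sig); reflexivity.
Qed.
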